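(* Let $n\ge2$ and $G=C_n\oplus C_n$. Let $(e_1,e_2)$ be a basis of $G$, let $x_1,x_2\in[0,n-1]$, and let $S=e_1^{[n-1]}\cdot e_2^{[n-1]}\cdot(x_1e_1+x_2e_2)^{[n-1]}$. Then $0\notin\Sigma_{\le n}(S)$ if and only if $(-x_1k)_n+(-x_2k)_n+(k)_n>n$ for every $k\in[1,n-1]$.
   Context: $C_n$ is a cyclic group of order $n$; $[a,b]$ denotes the integer interval; for integers $x$ and $n\ge1$, $(x)_n\in[0,n-1]$ denotes the least non-negative residue of $x$ modulo $n$. A basis of $G$ is an ordered pair $(e_1,e_2)$ with $G=\langle e_1\rangle\oplus\langle e_2\rangle$. A sequence over $G$ is a finite unordered list (multiset) of elements, $g^{[t]}$ denotes $g$ repeated $t$ times and $\cdot$ denotes concatenation. $\Sigma_{\le N}(S)$ is the set of sums of the terms of subsequences $T$ of $S$ with $1\le |T|\le N$. *)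

From mathcomp Require Import all_boot all_order all_algebra.
Set Implicit Arguments. Unset Strict Implicit. Unset Printing Implicit Defensive.
Import GRing.Theory Num.Theory.
Local Open Scope ring_scope.

(* The group C_n (+) C_n, modelled as 'Z_n * 'Z_n (only used with n >= 2). *)
Definition CnCn (n : nat) := ('Z_n * 'Z_n)%type.

(* (e1, e2) is a basis of G: G = <e1> (+) <e2>
   (internal direct sum: <e1> + <e2> = G and <e1> \cap <e2> = 0). *)
Definition is_basis (G : zmodType) (e1 e2 : G) : Prop :=
  (forall g : G, exists a b : nat, g = e1 *+ a + e2 *+ b) /\
  (forall a b : nat, e1 *+ a + e2 *+ b = 0 -> e1 *+ a = 0 /\ e2 *+ b = 0).

(* g \in Sigma_{<= N}(S): g is the sum of a subsequence T of S with
   1 <= |T| <= N.  Sequences are lists; a subsequence is selected by a mask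
   (orderings are irrelevant since sums are commutative). *)
Definition in_Sigma_le (G : zmodType) (N : nat) (S : seq G) (g : G) : Prop :=
  exists m : bitseq, size m = size S /\
    (0 < size (mask m S) <= N)%N /\ g = \sum_(x <- mask m S) x.

From HB Require Import structures.
From mathcomp Require Import all_boot all_order all_algebra.
Import Order.TTheory GRing.Theory Num.Theory.
Set Implicit Arguments. Unset Strict Implicit. Unset Printing Implicit Defensive.
Local Open Scope ring_scope.

(* In the basis (e1, e2), a subsequence of S made of a copies of e1, b copies
   of e2 and c copies of x1 e1 + x2 e2 sums to (a + x1 c) e1 + (b + x2 c) e2,
   which vanishes iff a = (-x1 c)_n and b = (-x2 c)_n, since a, b < n.  For
   c = 0 this forces the empty subsequence, so a zero-sum subsequence of length
   at most n exists iff (-x1 k)_n + (-x2 k)_n + k <= n for some k in [1, n-1]. *)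

Lemma mask_nseq (T : Type) (x : T) (m : bitseq) N :
  size m = N -> mask m (nseq N x) = nseq (count id m) x.
Proof. by move<-; elim: m => [|[] m IHm] //=; rewrite IHm. Qed.

Lemma sumr_nseq (V : nmodType) (x : V) k : \sum_(y <- nseq k x) y = x *+ k.
Proof. by elim: k => [|k IHk]; rewrite ?big_nil // big_cons IHk mulrS. Qed.

Lemma in_Sigma_le_nseq3 (V : zmodType) (M N : nat) (u v w g : V) :
  in_Sigma_le M (nseq N u ++ nseq N v ++ nseq N w) g <->
  exists a b c : nat, [/\ (a <= N)%N, (b <= N)%N, (c <= N)%N,
    (0 < a + b + c <= M)%N & g = u *+ a + v *+ b + w *+ c].
Proof.
split=> [[m [sz_m [size_mask ->]]] | [a [b [c [aN bN cN size_abc ->]]]]].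
  rewrite !size_cat !size_nseq in sz_m.
  have [m1 [m2 [m3 [def_m sz1 sz2 sz3]]]] : exists m1 m2 m3,
      [/\ m = m1 ++ m2 ++ m3, size m1 = N, size m2 = N & size m3 = N].
    exists (take N m), (take N (drop N m)), (drop N (drop N m)).
    by rewrite !cat_take_drop !size_drop !size_takel ?size_drop sz_m ?addKn ?leq_addr.
  move: size_mask; rewrite def_m !mask_cat ?size_nseq //.
  rewrite !(mask_nseq _ sz1, mask_nseq _ sz2, mask_nseq _ sz3).
  rewrite !size_cat !size_nseq addnA => size_mask.
  exists (count id m1), (count id m2), (count id m3).
  split=> //; rewrite ?big_cat /= ?sumr_nseq ?addrA //.
  - by rewrite -[N]sz1 count_size.
  - by rewrite -[N]sz2 count_size.
  - by rewrite -[N]sz3 count_size.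
have [prefix size_prefix count_prefix] : exists2 prefix : nat -> bitseq,
    forall j, (j <= N)%N -> size (prefix j) = N & forall j, count id (prefix j) = j.
  exists (fun j => nseq j true ++ nseq (N - j) false) => j.
    by move=> jN; rewrite size_cat !size_nseq subnKC.
  by rewrite count_cat !count_nseq mul1n mul0n addn0.
exists (prefix a ++ prefix b ++ prefix c).
rewrite !size_cat !size_prefix // !mask_cat ?size_nseq ?size_prefix //.
rewrite !(mask_nseq _ (size_prefix _ _)) // !count_prefix !size_cat !size_nseq !addnA.
by rewrite !big_cat /= !sumr_nseq addrA.
Qed.

Section SpanningPair.

Variables (G : finZmodType) (n : nat).
Hypothesis mulrn_n : forall x : G, x *+ n = 0.
Hypothesis card_G : #|G| = (n * n)%N.
Variables e1 e2 : G.
Hypothesis span_e : forall g : G, exists a b : nat, g = e1 *+ a + e2 *+ b.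

Let n_gt0 : (0 < n)%N.
Proof.
have : (0 < #|G|)%N by apply/card_gt0P; exists 0.
by rewrite card_G muln_gt0 andbb.
Qed.

Lemma mulrn_modn (x : G) a : x *+ (a %% n) = x *+ a.
Proof. by rewrite [in RHS](divn_eq a n) mulrnDr mulrnA mulrn_n add0r. Qed.

(* Counting: the n * n coordinate pairs in [0, n)^2 already reach all of G,
   so the independence half of is_basis is automatic. *)
Lemma span_coord_inj : injective (fun p : 'I_n * 'I_n => e1 *+ p.1 + e2 *+ p.2).
Proof.
set f := fun p => _.
suff /image_injP f_inj : #|codom f| == #|{: 'I_n * 'I_n}| by move=> p q; apply: f_inj.
rewrite eqn_leq leq_image_card card_prod card_ord -card_G /=.
apply/subset_leq_card/subsetP => g _; have [a [b ->]] := span_e g.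
rewrite -(mulrn_modn e1 a) -(mulrn_modn e2 b).
exact: (codom_f f (Ordinal (ltn_pmod a n_gt0), Ordinal (ltn_pmod b n_gt0))).
Qed.

Lemma span_coord_eq0 a b : (e1 *+ a + e2 *+ b == 0) = (n %| a)%N && (n %| b)%N.
Proof.
apply/eqP/andP => [comb0 | [/eqP a0 /eqP b0]].
  have := @span_coord_inj (Ordinal (ltn_pmod a n_gt0), Ordinal (ltn_pmod b n_gt0))
                         (Ordinal n_gt0, Ordinal n_gt0).
  by rewrite /= !mulrn_modn comb0 !mulr0n addr0 => /(_ erefl) [a0 b0]; rewrite /dvdn a0 b0.
by rewrite -(mulrn_modn e1 a) -(mulrn_modn e2 b) a0 b0 !mulr0n addr0.
Qed.

Lemma in_Sigma_le0_span_nseq3 x1 x2 :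
  in_Sigma_le n (nseq (n - 1) e1 ++ nseq (n - 1) e2 ++ nseq (n - 1) (e1 *+ x1 + e2 *+ x2)) 0 <->
  exists a b c : nat, [/\ (a <= n - 1)%N, (b <= n - 1)%N, (c <= n - 1)%N,
    (0 < a + b + c <= n)%N & (n %| a + x1 * c)%N && (n %| b + x2 * c)%N].
Proof.
have combE a b c : e1 *+ a + e2 *+ b + (e1 *+ x1 + e2 *+ x2) *+ c =
                   e1 *+ (a + x1 * c) + e2 *+ (b + x2 * c).
  by rewrite mulrnDl -!mulrnA !mulrnDr addrACA.
split=> [/in_Sigma_le_nseq3 | ] [a [b [c [aN bN cN abc comb0]]]];
  [| apply/in_Sigma_le_nseq3]; exists a, b, c; split=> //.
  by rewrite -span_coord_eq0 -combE -comb0.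
by apply/esym/eqP; rewrite combE span_coord_eq0.
Qed.

End SpanningPair.

HB.instance Definition _ (n : nat) := GRing.Zmodule.on (CnCn n).
HB.instance Definition _ (n : nat) := Finite.on (CnCn n).

Lemma CnCn_mulrn_n n : (1 < n)%N -> forall x : CnCn n, x *+ n = 0.
Proof.
move=> n_gt1 x; apply: injective_projections => /=;
  by rewrite raddfMn -mulr_natr pchar_Zp // mulr0.
Qed.

Lemma card_CnCn n : (1 < n)%N -> #|{: CnCn n}| = (n * n)%N.
Proof. by move=> n_gt1; rewrite card_prod card_ord Zp_cast. Qed.

Lemma dvdn_add_negmodz (n a x c : nat) : (a < n)%N ->
  (n %| a + x * c)%N = (a%:Z == (- (x%:Z * c%:Z)) %% n%:Z)%Z.
Proof.
move=> a_lt_n; rewrite -[a%:Z](@modz_small _ n) ?lez_nat ?ltz_nat //.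
by rewrite eqz_mod_dvd opprK dvdzE -PoszM -PoszD.
Qed.

Lemma modz_nat_repr (m : int) (n : nat) : (0 < n)%N ->
  exists2 a : nat, (a < n)%N & a%:Z = (m %% n%:Z)%Z.
Proof.
move=> n_gt0; exists `|(m %% n%:Z)%Z|%N; last by rewrite gez0_abs ?modz_ge0 -?lt0n.
by rewrite -ltz_nat gez0_abs ?modz_ge0 ?ltz_pmod -?lt0n.
Qed.

Lemma exists_vanishing_triple (n x1 x2 : nat) : (0 < n)%N ->
  (exists a b c : nat, [/\ (a <= n - 1)%N, (b <= n - 1)%N, (c <= n - 1)%N,
     (0 < a + b + c <= n)%N & (n %| a + x1 * c)%N && (n %| b + x2 * c)%N]) <->
  exists2 k : nat, (1 <= k <= n - 1)%N &
    ((- (x1%:Z * k%:Z)) %% n%:Z)%Z + ((- (x2%:Z * k%:Z)) %% n%:Z)%Z + (k%:Z %% n%:Z)%Z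
      <= n%:Z.
Proof.
move=> n_gt0; have lt_n j : (j < n)%N = (j <= n - 1)%N by rewrite leq_subRL // add1n.
have modz_id j : (j <= n - 1)%N -> (j%:Z %% n%:Z)%Z = j%:Z.
  by move=> jn; rewrite modz_small // lez_nat ltz_nat lt_n.
split=> [[a [b [c [aN bN cN /andP[abc_gt0 abc_le] /andP[dvd_a dvd_b]]]]] |].
  rewrite dvdn_add_negmodz ?lt_n // in dvd_a.
  rewrite dvdn_add_negmodz ?lt_n // in dvd_b.
  have [c0 | c_gt0] := posnP c.
    move: dvd_a dvd_b abc_gt0; rewrite c0 !mulr0 oppr0 mod0z.
    by rewrite !eqz_nat => /eqP-> /eqP->.
  exists c; first by rewrite c_gt0.
  by rewrite -(eqP dvd_a) -(eqP dvd_b) modz_id // -!PoszD lez_nat.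
move=> [k /andP[k_gt0 kn]]; rewrite modz_id //.
have [a a_lt_n a_def] := modz_nat_repr (- (x1%:Z * k%:Z)) n_gt0.
have [b b_lt_n b_def] := modz_nat_repr (- (x2%:Z * k%:Z)) n_gt0.
rewrite -a_def -b_def -!PoszD lez_nat => abk_le.
exists a, b, k; split=> //.
- by rewrite -lt_n.
- by rewrite -lt_n.
- by rewrite abk_le addn_gt0 k_gt0 orbT.
- by rewrite !dvdn_add_negmodz // a_def b_def !eqxx.
Qed.

Theorem lemma2p1 (n : nat) (hn : (2 <= n)%N) (e1 e2 : CnCn n)
  (hb : is_basis e1 e2) (x1 x2 : nat) (hx1 : (x1 <= n - 1)%N) (hx2 : (x2 <= n - 1)%N) :
  let S := nseq (n - 1) e1 ++ nseq (n - 1) e2 ++ nseq (n - 1) (e1 *+ x1 + e2 *+ x2) in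
  ~ in_Sigma_le n S 0 <->
  (forall k : nat, (1 <= k <= n - 1)%N ->
     ((- (x1%:Z * k%:Z)) %% n%:Z)%Z + ((- (x2%:Z * k%:Z)) %% n%:Z)%Z + (k%:Z %% n%:Z)%Z
       > n%:Z).
Proof.
move=> S.
have zero_sumE := iff_trans
  (in_Sigma_le0_span_nseq3 (CnCn_mulrn_n hn) (card_CnCn hn) hb.1 x1 x2)
  (exists_vanishing_triple x1 x2 (ltnW hn)).
split=> [no_zero_sum k k_range | all_k /zero_sumE [k k_range]].
  by rewrite ltNge; apply/negP => le_n; apply/no_zero_sum/zero_sumE; exists k.
by apply/negP; rewrite -ltNge; apply: all_k.
Qed.
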